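(* Let $n\ge 4$ and let $\mathcal{D}_n$ be a minimal complete DFA with state set $Q=\{0,\dots,n-1\}$, initial state $0$ and empty state $n-1$, accepting a suffix-free language, and let $T(n)$ be its transition semigroup. If no pair of states is colliding in $T(n)$, then $|T(n)|\le (n-1)^{n-2}+n-2$ and $T(n)$ is a subsemigroup of $\mathbf{W}_{\mathrm{sf}}(n)$.
   Context: A language $L$ is suffix-free if whenever $w\in L$ and $u\in L$ with $u$ a suffix of $w$, then $u=w$. Transformations act on the right ($qt$ is the image of $q$ under $t$). The transition semigroup of a DFA is the semigroup of transformations of its state set generated by the transformations induced by its letters. A minimal complete DFA of a suffix-free language with $n\ge 2$ states has exactly one empty state (a state from which no final state is reachable), labeled $n-1$. An unordered pair $\{p,q\}$ of distinct states of $Q\setminus\{0,n-1\}$ is colliding in $T(n)$ if there exist $t\in T(n)$ and $r\in Q\setminus\{0,n-1\}$ with $0t=p$ and $rt=q$. Define $\mathbf{B}_{\mathrm{sf}}(n)=\{t:Q\to Q \mid 0\notin Qt,\ (n-1)t=n-1,\ \text{and for all } j\ge1:\ 0t^j=n-1 \text{ or } 0t^j\neq qt^j \text{ for all } 0<q<n-1\}$ and $\mathbf{W}_{\mathrm{sf}}(n)=\{t\in\mathbf{B}_{\mathrm{sf}}(n)\mid 0t=n-1 \text{ or } qt=n-1 \text{ for all } 1\le q\le n-2\}$. *)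

From HB Require Import structures.
From mathcomp Require Import all_boot.
From mathcomp Require Import boolp.
Set Implicit Arguments. Unset Strict Implicit. Unset Printing Implicit Defensive.

(* A DFA with state set Q = 'I_n, alphabet a finType S,
   transition function d (complete), final states F.  Transformations act
   on the right: q(wa) = (qw)a. *)

Section DFA.
Variables (n : nat) (S : finType).

Definition is_init (q : 'I_n) : bool := val q == 0.
Definition is_empty_label (q : 'I_n) : bool := val q == n.-1.
Definition is_mid (q : 'I_n) : bool := (0 < val q) && (val q < n.-1).

Variable d : S -> 'I_n -> 'I_n.

Definition run (q : 'I_n) (w : seq S) : 'I_n := foldl (fun p a => d a p) q w.

Definition wordT (w : seq S) : {ffun 'I_n -> 'I_n} := [ffun q => run q w].

Definition transSemigroup : {set {ffun 'I_n -> 'I_n}} :=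
  [set t | `[< exists w : seq S, w != [::] /\ t = wordT w >]].

Variable F : {set 'I_n}.

Definition accepts (w : seq S) : bool := [exists q, is_init q && (run q w \in F)].

Definition suffix_free (L : seq S -> bool) : Prop :=
  forall w u, L w -> L u -> suffix u w -> u = w.

Definition minimal_dfa : Prop :=
  (forall q, exists w, exists2 z, is_init z & run z w = q) /\
  (forall p q, p != q -> exists w, (run p w \in F) != (run q w \in F)).

Definition is_empty_state (q : 'I_n) : Prop := forall w, run q w \notin F.

(* ordered version; the unordered pair {p,q} collides iff colliding p q or colliding q p *)
Definition colliding (p q : 'I_n) : Prop :=
  [/\ p != q, is_mid p, is_mid q &
     exists2 t, t \in transSemigroup &
       exists z r, [/\ is_init z, is_mid r, t z = p & t r = q]].
End DFA.

Definition in_Bsf (n : nat) (t : {ffun 'I_n -> 'I_n}) : Prop :=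
  [/\ (forall q, ~~ is_init (t q)),
      (forall q, is_empty_label q -> is_empty_label (t q)) &
      (forall j, 0 < j -> forall z, is_init z ->
          is_empty_label (iter j t z) \/
          forall q, is_mid q -> iter j t z != iter j t q)].

Definition in_Wsf (n : nat) (t : {ffun 'I_n -> 'I_n}) : Prop :=
  in_Bsf t /\
  (forall z, is_init z -> is_empty_label (t z) \/
     forall q, is_mid q -> is_empty_label (t q)).

Definition Wsf (n : nat) : {set {ffun 'I_n -> 'I_n}} := [set t | `[< in_Wsf t >]].

From mathcomp Require Import all_boot.
From mathcomp Require Import boolp.
From mathcomp Require Import zify.

Set Implicit Arguments.
Unset Strict Implicit.
Unset Printing Implicit Defensive.

(* Suffix-freeness forbids an accepted word from being a proper suffix of
   another accepted word.  Hence no nonempty word leads back to the initial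
   state 0, and if a nonempty word w sends 0 and a middle state q to the same
   state, that state is empty: otherwise u w v and w v would both be
   accepted, where u leads from 0 to q.  If moreover no pair collides, a
   transformation t with 0t non-empty sends every middle state to n-1.
   This places T(n) inside W_sf(n), whose elements are determined by the
   middle state 0t when 0t <> n-1, and otherwise by their values on the
   n-2 middle states, each taken in Q \ {0}. *)

Section StateLabels.
Variable n : nat.
Implicit Types p q : 'I_n.

Lemma is_init_eq p q : is_init p -> is_init q -> p = q.
Proof. by move=> /eqP p0 /eqP q0; apply: val_inj; rewrite /= p0 q0. Qed.

Lemma is_empty_label_eq p q : is_empty_label p -> is_empty_label q -> p = q.
Proof. by move=> /eqP pE /eqP qE; apply: val_inj; rewrite /= pE qE. Qed.

Lemma state_cases q : [|| is_init q, is_empty_label q | is_mid q].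
Proof. by case: q => i lt_in; rewrite /is_init /is_empty_label /is_mid /=; lia. Qed.

Lemma mid_not_init q : is_mid q -> ~~ is_init q.
Proof. by rewrite /is_mid /is_init; case/andP; lia. Qed.

Lemma mid_not_empty q : is_mid q -> ~~ is_empty_label q.
Proof. by rewrite /is_mid /is_empty_label; case/andP; lia. Qed.

Lemma not_init_empty_mid q : ~~ is_init q -> ~~ is_empty_label q -> is_mid q.
Proof. by move=> /negbTE q_ninit /negbTE q_ne; move: (state_cases q); rewrite q_ninit q_ne. Qed.

Lemma init_not_empty q : 1 < n -> is_init q -> ~~ is_empty_label q.
Proof. by rewrite /is_init /is_empty_label => n_gt1 /eqP ->; lia. Qed.

Lemma card_not_init : 0 < n -> #|[pred q : 'I_n | ~~ is_init q]| = n.-1.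
Proof.
move=> n_gt0; have := cardC1 (Ordinal n_gt0); rewrite card_ord => <-.
by apply: eq_card => q; rewrite !inE.
Qed.

Lemma card_mid : 1 < n -> #|[pred q : 'I_n | is_mid q]| = n - 2.
Proof.
move=> n_gt1; have lt_last : n.-1 < n by lia.
have last_neq0 : n.-1 != 0 by lia.
have := cardD1 (Ordinal lt_last) [pred q : 'I_n | ~~ is_init q].
rewrite card_not_init ?inE /is_init /= ?last_neq0 //; last lia.
have -> : n - 2 = n.-1 - 1 by lia.
move=> ->; rewrite addKn; apply: eq_card => q.
by rewrite !inE /is_init /is_mid -val_eqE /=; have := ltn_ord q; lia.
Qed.

End StateLabels.

Lemma WsfP n (t : {ffun 'I_n -> 'I_n}) : reflect (in_Wsf t) (t \in Wsf n).
Proof. by rewrite inE; apply: asboolP. Qed.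

Section WsfCard.
Variable n : nat.
Implicit Types t : {ffun 'I_n -> 'I_n}.

Lemma Wsf_nmid_empty t q : t \in Wsf n -> ~~ is_mid (t q) -> is_empty_label (t q).
Proof.
by move=> /WsfP [[t_ninit _ _] _]; apply: contraNT; apply: not_init_empty_mid.
Qed.

Lemma Wsf_mid_empty t z q : t \in Wsf n -> is_init z -> is_mid (t z) ->
  is_mid q -> is_empty_label (t q).
Proof.
move=> /WsfP [_ /[apply] t_shape] /mid_not_empty tz_ne q_mid.
by case: t_shape (negbTE tz_ne) => [->|/(_ q q_mid)].
Qed.

Lemma Wsf_eq t1 t2 z : t1 \in Wsf n -> t2 \in Wsf n -> is_init z ->
  t1 z = t2 z -> (forall q, is_mid q -> t1 q = t2 q) -> t1 = t2.
Proof.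
move=> /WsfP [[_ t1E _] _] /WsfP [[_ t2E _] _] z_init t12z t12mid.
apply/ffunP => q; case/or3P: (state_cases q) => [q_init|qE|/t12mid //].
- by rewrite -(is_init_eq z_init q_init).
- by apply: is_empty_label_eq; [apply: t1E | apply: t2E].
Qed.

Lemma card_Wsf : 1 < n -> #|Wsf n| <= n.-1 ^ (n - 2) + n - 2.
Proof.
move=> n_gt1; pose z : 'I_n := Ordinal (ltnW n_gt1).
have z_init : is_init z by [].
have lt_last : n.-1 < n by lia.
have last_ninit : ~~ is_init (Ordinal lt_last) by rewrite /is_init /=; lia.
pose M := {q : 'I_n | is_mid q}; pose N := {q : 'I_n | ~~ is_init q}.
pose enc t : {ffun M -> N} + M := if insub (t z) is Some m then inr m
  else inl [ffun m : M => insubd (exist _ (Ordinal lt_last) last_ninit : N) (t (val m))].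
have enc_inj : {in Wsf n &, injective enc}.
  move=> t1 t2 t1W t2W; apply: contra_eq => t12_neq; rewrite /enc.
  case: insubP => [m1 m1_mid m1E|t1z_nmid]; case: insubP => [m2 m2_mid m2E|t2z_nmid] //;
    apply: contra_neq t12_neq => -[m12]; apply: (Wsf_eq t1W t2W z_init).
  - by rewrite -m1E -m2E m12.
  - move=> q q_mid; apply: is_empty_label_eq.
      exact: (Wsf_mid_empty t1W z_init m1_mid q_mid).
    exact: (Wsf_mid_empty t2W z_init m2_mid q_mid).
  - by apply: is_empty_label_eq; apply: Wsf_nmid_empty.
  move=> q q_mid; move/(congr1 (fun f : {ffun M -> N} => val (f (exist _ q q_mid)))): m12.
  have /WsfP [[t1_ninit _ _] _] := t1W; have /WsfP [[t2_ninit _ _] _] := t2W.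
  have := t1_ninit q; have := t2_ninit q.
  by rewrite !ffunE => ? ?; rewrite !insubdK.
rewrite -(card_in_imset enc_inj); apply: leq_trans (max_card _) _.
rewrite card_sum card_ffun !card_sig card_not_init ?card_mid //; lia.
Qed.

End WsfCard.

Section TransitionSemigroup.
Variables (n : nat) (S : finType) (d : S -> 'I_n -> 'I_n).

Lemma run_cat q u w : run d q (u ++ w) = run d (run d q u) w.
Proof. by rewrite /run foldl_cat. Qed.

Lemma transSemigroupP t :
  reflect (exists w, w != [::] /\ t = wordT d w) (t \in transSemigroup d).
Proof. by rewrite inE; apply: asboolP. Qed.

Lemma transSemigroup_comp s t : s \in transSemigroup d -> t \in transSemigroup d ->
  [ffun q => t (s q)] \in transSemigroup d.
Proof.
move=> /transSemigroupP [u [u_nil ->]] /transSemigroupP [w [_ ->]].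
apply/transSemigroupP; exists (u ++ w); split; first by case: u u_nil.
by apply/ffunP => q; rewrite !ffunE run_cat.
Qed.

Lemma transSemigroup_iter t j : t \in transSemigroup d ->
  [ffun q => iter j.+1 t q] \in transSemigroup d.
Proof.
move=> tT; elim: j => [|j IHj].
  by rewrite (_ : [ffun q => _] = t) //; apply/ffunP => q; rewrite ffunE.
rewrite (_ : [ffun q => _] = [ffun q => t ([ffun q => iter j.+1 t q] q)]).
  exact: transSemigroup_comp.
by apply/ffunP => q; rewrite !ffunE.
Qed.

End TransitionSemigroup.

Section SuffixFreeDFA.
Variables (n : nat) (S : finType) (d : S -> 'I_n -> 'I_n) (F : {set 'I_n}).
Hypothesis n_gt1 : 1 < n.
Hypothesis d_minimal : minimal_dfa d F.
Hypothesis d_empty : forall q : 'I_n, is_empty_label q -> is_empty_state d F q.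
Hypothesis d_suffix_free : suffix_free (accepts d F).

Lemma accepts_init z w : is_init z -> accepts d F w = (run d z w \in F).
Proof.
move=> z_init; apply/existsP/idP => [[z' /andP [z'_init]]|z_acc].
  by rewrite (is_init_eq z'_init z_init).
by exists z; rewrite z_init.
Qed.

Lemma run_accepting q : ~~ is_empty_label q -> exists v, run d q v \in F.
Proof.
have lt_last : n.-1 < n by lia.
move=> q_ne; have q_neq : q != Ordinal lt_last.
  by apply: contraNneq q_ne => ->; rewrite /is_empty_label.
have [v q_v] := d_minimal.2 _ _ q_neq; exists v.
by move: q_v; rewrite (negbTE (d_empty (q := Ordinal lt_last) (eqxx n.-1) v)); case: (_ \in F).
Qed.

Lemma run_accepted_suffix z u v : is_init z ->
  run d z v \in F -> run d z (u ++ v) \in F -> u = [::].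
Proof.
move=> z_init v_acc uv_acc; rewrite -!(accepts_init _ z_init) in v_acc uv_acc.
have /(congr1 size) := d_suffix_free uv_acc v_acc (suffix_suffix u v).
by rewrite size_cat; case: u {uv_acc} => //= a u; lia.
Qed.

Lemma transSemigroup_empty t q : t \in transSemigroup d ->
  is_empty_label q -> is_empty_label (t q).
Proof.
case/transSemigroupP => w [_ ->] q_empty; rewrite ffunE.
apply/negPn/negP => /run_accepting [v wv_acc].
by have /negP[] := d_empty q_empty (w ++ v); rewrite run_cat.
Qed.

Lemma transSemigroup_not_init t q : t \in transSemigroup d -> ~~ is_init (t q).
Proof.
case/transSemigroupP => w [w_nil ->]; rewrite ffunE; apply/negP => qw_init.
have [u [z z_init zu]] := d_minimal.1 q.
have [v zv_acc] := run_accepting (init_not_empty n_gt1 z_init).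
suff uw_nil : u ++ w = [::] by move: w_nil; case: (u) uw_nil => [/= ->|].
apply: (run_accepted_suffix z_init zv_acc).
by rewrite !run_cat zu (is_init_eq qw_init z_init).
Qed.

Lemma transSemigroup_merge t z q : t \in transSemigroup d -> is_init z ->
  is_mid q -> t z = t q -> is_empty_label (t z).
Proof.
case/transSemigroupP => w [_ ->] z_init q_mid; rewrite !ffunE => zq_eq.
apply/negPn/negP => /run_accepting [v zwv_acc].
have [u [z' z'_init z'u]] := d_minimal.1 q.
move: z'u; rewrite (is_init_eq z'_init z_init) => zu.
have u_nil : u = [::].
  apply: (run_accepted_suffix z_init (v := w ++ v)); first by rewrite run_cat.
  by rewrite !run_cat zu -zq_eq.
by move: q_mid; rewrite -zu u_nil => /mid_not_init; rewrite z_init.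
Qed.

Lemma transSemigroup_Bsf t : t \in transSemigroup d -> in_Bsf t.
Proof.
move=> tT; split=> [q|q|[//|j] _ z z_init]; first exact: transSemigroup_not_init.
  exact: transSemigroup_empty.
have tjT := transSemigroup_iter j tT.
have [zE|zE] := boolP (is_empty_label (iter j.+1 t z)); [left | right] => // q q_mid.
apply: contra zE => /eqP zq_eq.
by have := transSemigroup_merge tjT z_init q_mid; rewrite !ffunE; apply.
Qed.

Hypothesis d_no_collision : forall p q : 'I_n, ~ colliding d p q.

Lemma transSemigroup_mid_empty t z q : t \in transSemigroup d -> is_init z ->
  ~~ is_empty_label (t z) -> is_mid q -> is_empty_label (t q).
Proof.
move=> tT z_init tz_ne q_mid.
have mid_image p : ~~ is_empty_label (t p) -> is_mid (t p).
  exact/not_init_empty_mid/transSemigroup_not_init.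
apply/negPn/negP => /mid_image tq_mid.
have [zq_eq|zq_neq] := eqVneq (t z) (t q).
  by move: tz_ne; rewrite (transSemigroup_merge tT z_init q_mid zq_eq).
apply: (d_no_collision (And4 zq_neq (mid_image _ tz_ne) tq_mid _)).
by exists t => //; exists z, q.
Qed.

Lemma transSemigroup_sub_Wsf : transSemigroup d \subset Wsf n.
Proof.
apply/subsetP => t tT; apply/WsfP; split; first exact: transSemigroup_Bsf.
move=> z z_init; have [tz_empty|tz_ne] := boolP (is_empty_label (t z)); first by left.
by right=> q; apply: (transSemigroup_mid_empty tT z_init tz_ne).
Qed.

End SuffixFreeDFA.

Theorem lemma2 (n : nat) (S : finType) (d : S -> 'I_n -> 'I_n) (F : {set 'I_n}) :
  4 <= n ->
  minimal_dfa d F ->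
  (forall q : 'I_n, is_empty_label q -> is_empty_state d F q) ->
  suffix_free (accepts d F) ->
  (forall p q : 'I_n, ~ colliding d p q) ->
  #|transSemigroup d| <= (n.-1) ^ (n - 2) + n - 2 /\ transSemigroup d \subset Wsf n.
Proof.
move=> n_ge4 d_minimal d_empty d_suffix_free d_no_collision.
have n_gt1 : 1 < n by apply: leq_trans n_ge4.
have T_sub_W := transSemigroup_sub_Wsf n_gt1 d_minimal d_empty d_suffix_free d_no_collision.
by split=> //; apply: leq_trans (subset_leq_card T_sub_W) (card_Wsf n_gt1).
Qed.
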